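(* Let $m\ge0$ be an integer. For $i\ge1$ put $\gamma_i=u-(1-zt)(1-t)^{i-1}(u-1)$. Then, as formal power series in $u,z,t$, $$\sum_{k\ge0}\frac{(u-1)^{m+1}(1-zt)^{m+1}u^k(1-t)^{k(m+1)}}{\prod_{i=1}^{k+1}\gamma_i}=-\sum_{j=0}^m(u-1)^j(1-zt)^ju^{m-j}\prod_{i=j+1}^m\bigl(1-(1-t)^i\bigr).$$
   Context: Each $\gamma_i$ has constant term $1$, so the quotients are formal power series over $\mathbb{Q}$, and the $k$-th summand is divisible by $u^k$, so the sum converges formally. An empty product equals $1$. *)

From HB Require Import structures.
From mathcomp Require Import all_boot all_order all_algebra.
Set Implicit Arguments. Unset Strict Implicit. Unset Printing Implicit Defensive.
Import Order.TTheory GRing.Theory Num.Theory.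
Local Open Scope ring_scope.

(* A formal power series in Q[[u,z,t]]: f a b c is the coefficient of u^a z^b t^c. *)
Definition fps := nat -> nat -> nat -> rat.

Definition fadd (f g : fps) : fps := fun a b c => f a b c + g a b c.
Definition fopp (f : fps) : fps := fun a b c => - f a b c.
Definition fsub (f g : fps) : fps := fadd f (fopp g).
Definition fmul (f g : fps) : fps := fun a b c =>
  \sum_(i < a.+1) \sum_(j < b.+1) \sum_(k < c.+1)
     f i j k * g (a - i)%N (b - j)%N (c - k)%N.

Definition fmono (p q r : nat) : fps := fun a b c =>
  ((a == p) && (b == q) && (c == r))%:R.
Definition fone : fps := fmono 0 0 0.
Definition U : fps := fmono 1 0 0.
Definition Z : fps := fmono 0 1 0.
Definition T : fps := fmono 0 0 1.

Definition fexp (f : fps) (n : nat) : fps := iter n (fmul f) fone.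

(* Inverse of a series with constant term 1: 1/f = sum_n (1 - f)^n; since
   1 - f has zero constant term, (1-f)^n has no monomials of total degree < n,
   so the coefficient of u^a z^b t^c only needs n <= a + b + c. *)
Definition finv (f : fps) : fps := fun a b c =>
  \sum_(n < (a + b + c).+1) fexp (fsub fone f) n a b c.
Definition fdiv (f g : fps) : fps := fmul f (finv g).

Definition fsum_seq (s : seq nat) (F : nat -> fps) : fps :=
  foldr (fun i acc => fadd (F i) acc) (fun _ _ _ => 0) s.
Definition fprod_seq (s : seq nat) (F : nat -> fps) : fps :=
  foldr (fun i acc => fmul (F i) acc) fone s.
(* product over lo <= i <= hi (empty product = 1 when hi < lo) *)
Definition fprod_range (lo hi : nat) (F : nat -> fps) : fps :=
  fprod_seq (iota lo (hi.+1 - lo)) F.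

Definition fseries_to (F : nat -> fps) (S : fps) : Prop :=
  forall a b c, exists N, forall n, (N <= n)%N ->
    fsum_seq (iota 0 n) F a b c = S a b c.

Definition gamma (i : nat) : fps :=
  fsub U (fmul (fmul (fsub fone (fmul Z T)) (fexp (fsub fone T) (i - 1)))
               (fsub U fone)).

From Pilot Require Import Defs.
From HB Require Import structures.
From mathcomp Require Import all_boot all_algebra boolp zify ring.
Set Implicit Arguments. Unset Strict Implicit. Unset Printing Implicit Defensive.
Import GRing.Theory.
Local Open Scope ring_scope.

(* Put q = 1 - t, a = (u - 1)(1 - z t), so that gamma_i = u - a q^(i-1), and
   g_m(b) = sum_(j <= m) b^j u^(m-j) prod_(j < i <= m) (1 - q^i); the right-hand
   side is -g_m(a).  Splitting off the top term of g_(m+1) and inducting on m gives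
   the functional equation u g_m(b q) = (u - b) g_m(b) + b^(m+1).  With
   b = a q^n it says that G_n = u^n g_m(a q^n) satisfies
   G_(n+1) = gamma_(n+1) G_n + a^(m+1) u^n q^(n(m+1)), so after division by
   P_n = gamma_1 ... gamma_n the k-th summand is G_(k+1)/P_(k+1) - G_k/P_k.
   The n-th partial sum is therefore u^n g_m(a q^n)/P_n - g_m(a), and the first
   term has no monomial of u-degree below n. *)

Definition fpsR : Type := fps.
HB.instance Definition _ := Choice.on fpsR.

Lemma fps_ext (f g : fps) : (forall a b c, f a b c = g a b c) -> f = g.
Proof.
by move=> efg; apply/funext => a; apply/funext => b; apply/funext => c.
Qed.

Definition fzero : fpsR := fun _ _ _ => 0.

Lemma faddA : associative (fadd : fpsR -> fpsR -> fpsR).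
Proof. by move=> f g h; apply: fps_ext => a b c; rewrite /fadd addrA. Qed.

Lemma faddC : commutative (fadd : fpsR -> fpsR -> fpsR).
Proof. by move=> f g; apply: fps_ext => a b c; rewrite /fadd addrC. Qed.

Lemma fadd0 : left_id fzero (fadd : fpsR -> fpsR -> fpsR).
Proof. by move=> f; apply: fps_ext => a b c; rewrite /fadd add0r. Qed.

Lemma faddN : left_inverse fzero (fopp : fpsR -> fpsR) fadd.
Proof. by move=> f; apply: fps_ext => a b c; rewrite /fadd /fopp addNr. Qed.

HB.instance Definition _ := GRing.isZmodule.Build fpsR faddA faddC fadd0 faddN.

(* Associativity and commutativity of the Cauchy product are transported from
   polynomials in three variables: below total degree N, a product of series
   only sees the truncations of its factors. *)
Local Notation poly3 := {poly {poly {poly rat}}}.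

Definition coef3 (p : poly3) a b c := p`_a`_b`_c.

Definition fps_trunc N (f : fps) : poly3 :=
  \poly_(i < N) \poly_(j < N) \poly_(k < N) f i j k.

Definition agree_below N (p : poly3) (f : fps) :=
  forall a b c, (a < N)%N -> (b < N)%N -> (c < N)%N -> coef3 p a b c = f a b c.

Lemma agree_below_trunc N f : agree_below N (fps_trunc N f) f.
Proof.
by move=> a b c ha hb hc; rewrite /coef3 coef_poly ha coef_poly hb coef_poly hc.
Qed.

Lemma agree_below_mul N p q f g :
  agree_below N p f -> agree_below N q g -> agree_below N (p * q) (fmul f g).
Proof.
move=> pf qg a b c ha hb hc; rewrite /coef3 /fmul coefM !coef_sum.
apply: eq_bigr => i _; rewrite coefM coef_sum; apply: eq_bigr => j _.
rewrite coefM; apply: eq_bigr => k _.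
have := ltn_ord i; have := ltn_ord j; have := ltn_ord k => hk hj hi.
change (coef3 p i j k * coef3 q (a - i) (b - j) (c - k)
  = f i j k * g (a - i)%N (b - j)%N (c - k)%N).
by rewrite pf ?qg //; lia.
Qed.

Lemma fmulA : associative (fmul : fpsR -> fpsR -> fpsR).
Proof.
move=> f g h; apply: fps_ext => a b c; pose N := (a + b + c).+1.
have [ha hb hc] : [/\ a < N, b < N & c < N]%N by rewrite /N; split; lia.
have trf := @agree_below_trunc N f; have trg := @agree_below_trunc N g.
have trh := @agree_below_trunc N h.
rewrite -(agree_below_mul (agree_below_mul trf trg) trh ha hb hc).
by rewrite -(agree_below_mul trf (agree_below_mul trg trh) ha hb hc) mulrA.
Qed.

Lemma fmulC : commutative (fmul : fpsR -> fpsR -> fpsR).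
Proof.
move=> f g; apply: fps_ext => a b c; pose N := (a + b + c).+1.
have [ha hb hc] : [/\ a < N, b < N & c < N]%N by rewrite /N; split; lia.
have trf := @agree_below_trunc N f; have trg := @agree_below_trunc N g.
rewrite -(agree_below_mul trf trg ha hb hc).
by rewrite -(agree_below_mul trg trf ha hb hc) mulrC.
Qed.

Lemma fmul1 : left_id (fone : fpsR) fmul.
Proof.
move=> f; apply: fps_ext => a b c.
rewrite /fmul big_ord_recl [X in _ + X]big1 ?addr0 => [|i _]; last first.
  by apply: big1 => j _; apply: big1 => k _; rewrite /fone /fmono mul0r.
rewrite big_ord_recl [X in _ + X]big1 ?addr0 => [|j _]; last first.
  by apply: big1 => k _; rewrite /fone /fmono mul0r.
rewrite big_ord_recl [X in _ + X]big1 ?addr0 => [|k _]; last by rewrite /fone /fmono mul0r.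
by rewrite /fone /fmono mul1r !subn0.
Qed.

Lemma fmulDl : left_distributive (fmul : fpsR -> fpsR -> fpsR) fadd.
Proof.
move=> f g h; apply: fps_ext => a b c; rewrite /fmul /fadd -big_split.
apply: eq_bigr => i _; rewrite -big_split; apply: eq_bigr => j _.
by rewrite -big_split; apply: eq_bigr => k _; rewrite mulrDl.
Qed.

Lemma fone_neq0 : (fone : fpsR) != 0.
Proof. by apply/eqP => /(congr1 (fun f : fpsR => f 0%N 0%N 0%N)). Qed.

HB.instance Definition _ :=
  GRing.Zmodule_isComNzRing.Build fpsR fmulA fmulC fmul1 fmulDl fone_neq0.

Lemma fmulE (f g : fps) : fmul f g = (f : fpsR) * (g : fpsR). Proof. by []. Qed.
Lemma fsubE (f g : fps) : fsub f g = (f : fpsR) - (g : fpsR). Proof. by []. Qed.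
Lemma foppE (f : fps) : fopp f = - (f : fpsR). Proof. by []. Qed.
Lemma foneE : fone = (1 : fpsR). Proof. by []. Qed.

Lemma coefB (f g : fpsR) a b c : (f - g) a b c = f a b c - g a b c.
Proof. by []. Qed.

Lemma fexpE (f : fps) n : fexp f n = (f : fpsR) ^+ n.
Proof. by elim: n => //= n ->; rewrite exprS. Qed.

Lemma fsum_iota0E n (G : nat -> fps) :
  fsum_seq (iota 0 n) G = \sum_(0 <= i < n) (G i : fpsR).
Proof.
rewrite /index_iota subn0.
by elim: (iota _ _) => [|i s IH]; rewrite ?big_nil ?big_cons //= IH.
Qed.

Lemma fprod_rangeE lo hi (G : nat -> fps) :
  fprod_range lo hi G = \prod_(lo <= i < hi.+1) (G i : fpsR).
Proof.
rewrite /fprod_range /index_iota.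
by elim: (iota _ _) => [|i s IH]; rewrite ?big_nil ?big_cons //= IH.
Qed.

Definition fconst (f : fpsR) : rat := f 0%N 0%N 0%N.

Lemma fconst_is_zmod_morphism : zmod_morphism fconst.
Proof. by []. Qed.

HB.instance Definition _ :=
  GRing.isZmodMorphism.Build fpsR rat fconst fconst_is_zmod_morphism.

Lemma fconst_is_monoid_morphism : monoid_morphism fconst.
Proof. by split=> // f g; rewrite /fconst /GRing.mul /= /fmul !big_ord1. Qed.

HB.instance Definition _ :=
  GRing.isMonoidMorphism.Build fpsR rat fconst fconst_is_monoid_morphism.

Lemma coef_expr_small (h : fpsR) n a b c :
  fconst h = 0 -> (a + b + c < n)%N -> (h ^+ n) a b c = 0.
Proof.
move=> h0; elim: n a b c => // n IH a b c abc_lt.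
rewrite exprS /GRing.mul /= /fmul.
apply: big1 => i _; apply: big1 => j _; apply: big1 => k _.
have := ltn_ord i; have := ltn_ord j; have := ltn_ord k => hk hj hi.
have [ijk0 | ijk_gt0] := posnP (i + j + k).
  have [-> -> ->] : [/\ i = 0 :> nat, j = 0 :> nat & k = 0 :> nat]%N by split; lia.
  by rewrite [h 0%N 0%N 0%N]h0 mul0r.
by rewrite IH ?mulr0 //; lia.
Qed.

Lemma coef_mulr_congr (f g g' : fpsR) a b c :
    (forall i j k, (i <= a)%N -> (j <= b)%N -> (k <= c)%N -> g i j k = g' i j k) ->
  (f * g) a b c = (f * g') a b c.
Proof.
move=> egg'; apply: eq_bigr => i _; apply: eq_bigr => j _; apply: eq_bigr => k _.
by rewrite egg' // leq_subr.
Qed.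

(* Below total degree N, finv g is the geometric sum of (1 - g)^n for n <= N,
   and g times that sum is 1 - (1 - g)^(N+1). *)
Lemma mulr_finv (g : fpsR) : fconst g = 1 -> g * (Defs.finv g : fpsR) = 1.
Proof.
move=> g1; pose h := 1 - g.
have h0 : fconst h = 0 by change (fconst 1 - fconst g = 0); rewrite g1 subrr.
apply: fps_ext => a b c; pose N := (a + b + c)%N.
pose S := \sum_(n < N.+1) h ^+ n.
have coefS i j k : S i j k = \sum_(n < N.+1) (h ^+ n) i j k.
  by rewrite /S; elim/big_rec2: _ => // n f s _ <-.
rewrite (@coef_mulr_congr _ _ S) => [|i j k ia jb kc].
  have -> : g * S = 1 - h ^+ N.+1.
    rewrite -[X in X - _](expr1n _ N.+1) subrXX /h opprB addrC subrK.
    by under [in RHS]eq_bigr do rewrite expr1n mul1r.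
  by rewrite coefB coef_expr_small ?subr0.
have ijk_le : ((i + j + k).+1 <= N.+1)%N by rewrite /N; lia.
rewrite coefS /Defs.finv (big_ord_widen _ (fun n => fexp (fsub fone g) n i j k) ijk_le).
rewrite big_mkcond; apply: eq_bigr => n _; rewrite fexpE.
by case: ltnP => // n_big; rewrite coef_expr_small.
Qed.

Lemma coef_UXM_small n (f : fpsR) a b c : (a < n)%N -> ((U : fpsR) ^+ n * f) a b c = 0.
Proof.
elim: n a b c => // n IH a b c a_lt; rewrite exprS -mulrA.
apply: big1 => i _; apply: big1 => j _; apply: big1 => k _.
have [i1 | /negbTE i_ne1] := eqVneq (i : nat) 1%N.
  by have := ltn_ord i => i_le; rewrite IH ?mulr0 //; lia.
by rewrite [U _ _ _]/U /fmono i_ne1 mul0r.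
Qed.

Section Identity.

Variables (R : comRingType) (u q : R).

Definition gsum m b :=
  \sum_(0 <= j < m.+1) b ^+ j * u ^+ (m - j) * \prod_(j.+1 <= i < m.+1) (1 - q ^+ i).

Lemma gsumS m b : gsum m.+1 b = (1 - q ^+ m.+1) * u * gsum m b + b ^+ m.+1.
Proof.
rewrite /gsum big_nat_recr //= subnn (big_geq (leqnn _)) expr0 !mulr1.
congr (_ + _); rewrite mulr_sumr; apply: eq_big_nat => j /andP [_ j_le_m].
by rewrite big_nat_recr //= subSn // exprS; ring.
Qed.

Lemma gsum_shift m b : u * gsum m (b * q) = (u - b) * gsum m b + b ^+ m.+1.
Proof.
elim: m b => [|m IH] b; first by rewrite /gsum !big_nat1 !(big_geq (leqnn _)); ring.
by rewrite !gsumS mulrDr mulrCA IH exprMn [b ^+ m.+2]exprS; ring.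
Qed.

Lemma telescope_quotients (G gam t P I : nat -> R) n :
    (forall k, G k.+1 = gam k.+1 * G k + t k) ->
    (forall k, P k.+1 = P k * gam k.+1) -> (forall k, P k * I k = 1) ->
  \sum_(0 <= k < n) t k * I k.+1 = G n * I n - G 0%N * I 0%N.
Proof.
move=> Grec Prec PI; apply: (telescope_sumr_eq (fun k => G k * I k)) => // k _.
have Igam : I k = gam k.+1 * I k.+1.
  by rewrite -[I k]mulr1 -(PI k.+1) Prec -mulrA mulrA [I k * _]mulrC PI mul1r.
by rewrite Grec Igam; ring.
Qed.

Variables (a : R) (m : nat).

Definition gprod n := \prod_(1 <= i < n.+1) (u - a * q ^+ (i - 1)).

Lemma gsum_rec n : u ^+ n.+1 * gsum m (a * q ^+ n.+1)
  = (u - a * q ^+ n) * (u ^+ n * gsum m (a * q ^+ n)) + a ^+ m.+1 * u ^+ n * q ^+ (n * m.+1).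
Proof.
by rewrite [u ^+ _]exprSr [q ^+ _]exprSr -mulrA [a * _]mulrA gsum_shift exprMn -exprM; ring.
Qed.

Lemma partial_sums_telescope (I : nat -> R) n :
    (forall k, gprod k * I k = 1) ->
  \sum_(0 <= k < n) a ^+ m.+1 * u ^+ k * q ^+ (k * m.+1) * I k.+1
  = u ^+ n * gsum m (a * q ^+ n) * I n - gsum m a.
Proof.
move=> PI; rewrite (@telescope_quotients (fun k => u ^+ k * gsum m (a * q ^+ k))
    (fun i => u - a * q ^+ (i - 1)) (fun k => a ^+ m.+1 * u ^+ k * q ^+ (k * m.+1))
    gprod I n) //.
- have := PI 0%N; rewrite /gprod big_geq // mul1r => ->.
  by rewrite !expr0 mulr1 mul1r mulr1.
- by move=> k; rewrite gsum_rec subn1.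
- by move=> k; rewrite /gprod big_nat_recr.
Qed.

End Identity.

Local Notation tq := (1 - (T : fpsR)).
Local Notation ta := (((U : fpsR) - 1) * (1 - (Z : fpsR) * T)).

Lemma fconst_gprod n : fconst (gprod (U : fpsR) tq ta n) = 1.
Proof.
rewrite rmorph_prod big1 // => i _.
rewrite !(rmorphB, rmorphM, rmorphXn, rmorph1) /= /fconst /U /Z /T /fmono /=.
by rewrite subr0 expr1n; ring.
Qed.

Definition gprod_inv k : fpsR := Defs.finv (gprod (U : fpsR) tq ta k).

Lemma gammaE i : (gamma i : fpsR) = (U : fpsR) - ta * tq ^+ (i - 1).
Proof. by rewrite /gamma !fsubE !fmulE fexpE foneE; ring. Qed.

Lemma summandE m k :
  fdiv (fmul (fmul (fmul (fexp (fsub U fone) m.+1) (fexp (fsub fone (fmul Z T)) m.+1))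
                   (fexp U k))
             (fexp (fsub fone T) (k * m.+1)))
       (fprod_range 1 k.+1 gamma)
  = ta ^+ m.+1 * (U : fpsR) ^+ k * tq ^+ (k * m.+1) * gprod_inv k.+1.
Proof.
rewrite /fdiv fprod_rangeE (eq_bigr _ (fun i _ => gammaE i)).
by rewrite !fmulE !fexpE !fsubE foneE exprMn.
Qed.

Lemma rhs_sumE m :
  fsum_seq (iota 0 m.+1) (fun j =>
       fmul (fmul (fmul (fexp (fsub U fone) j) (fexp (fsub fone (fmul Z T)) j))
                  (fexp U (m - j)))
            (fprod_range j.+1 m (fun i => fsub fone (fexp (fsub fone T) i))))
  = gsum (U : fpsR) tq m ta.
Proof.
rewrite fsum_iota0E; apply: eq_bigr => j _.
by rewrite fprod_rangeE !fmulE !fexpE !fsubE foneE exprMn; under eq_bigr do rewrite fexpE.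
Qed.

Theorem lemma7 (m : nat) :
  fseries_to
    (fun k => fdiv
       (fmul (fmul (fmul (fexp (fsub U fone) m.+1) (fexp (fsub fone (fmul Z T)) m.+1))
                   (fexp U k))
             (fexp (fsub fone T) (k * m.+1)))
       (fprod_range 1 k.+1 gamma))
    (fopp (fsum_seq (iota 0 m.+1) (fun j =>
       fmul (fmul (fmul (fexp (fsub U fone) j) (fexp (fsub fone (fmul Z T)) j))
                  (fexp U (m - j)))
            (fprod_range j.+1 m (fun i => fsub fone (fexp (fsub fone T) i)))))).
Proof.
move=> x y z; exists x.+1 => n x_lt_n.
rewrite rhs_sumE fsum_iota0E (eq_bigr _ (fun k _ => summandE m k)).
rewrite (@partial_sums_telescope _ (U : fpsR) tq ta m gprod_inv) => [|k]; last first.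
  exact/mulr_finv/fconst_gprod.
by rewrite foppE -mulrA coefB coef_UXM_small // sub0r.
Qed.
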